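(* Let $m>a\geq0$ and $n>b\geq0$ be integers, and let $\mathcal{C}_{\mathsf{col}}$ be a linear $[m,a]$ code and $\mathcal{C}_{\mathsf{row}}$ a linear $[n,b]$ code over a finite field $\mathbb{F}$. Then the set of maximal erasure patterns correctable by the tensor-product code $\mathsf{TP}(\mathcal{C}_{\mathsf{col}},\mathcal{C}_{\mathsf{row}})$ is a subset of $$\{([m]\times[n])\setminus\mathcal{E}\ \mid\ \mathcal{E}\in\mathbb{E}^{\max}_{m\times n}(a,b,0)\}.$$ Moreover, if $\mathsf{TP}(\mathcal{C}_{\mathsf{col}},\mathcal{C}_{\mathsf{row}})^\perp\in\mathbb{C}^{\mathsf{MR}}_{m\times n}(a,b,0)$, then $\mathsf{TP}(\mathcal{C}_{\mathsf{col}},\mathcal{C}_{\mathsf{row}})$ corrects all erasure patterns in this set.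
   Context: For linear codes $\mathcal{C}_{\mathsf{col}}$ ($[m,a]$) and $\mathcal{C}_{\mathsf{row}}$ ($[n,b]$) over $\mathbb{F}$ with full-rank parity-check matrices $\mathbf{H}_{\mathsf{col}}$, $\mathbf{H}_{\mathsf{row}}$, the tensor-product code $\mathsf{TP}(\mathcal{C}_{\mathsf{col}},\mathcal{C}_{\mathsf{row}})$ is the $[mn,mn-(m-a)(n-b)]$ code that is the dual of the row span of $\mathbf{H}_{\mathsf{col}}\otimes\mathbf{H}_{\mathsf{row}}$ (Kronecker product). Positions of vectors in $\mathbb{F}^{mn}$ are identified with $[m]\times[n]$, $[k]=\{1,\dots,k\}$. A linear code corrects an erasure pattern $\mathcal{E}$ (a set of positions) if no two distinct codewords agree on all positions outside $\mathcal{E}$; a maximal erasure pattern correctable by a code is a correctable pattern not properly contained in another pattern correctable by that code. For linear codes $\mathcal{D}_1\subseteq\mathbb{F}^m,\mathcal{D}_2\subseteq\mathbb{F}^n$, $\mathcal{D}_1\otimes\mathcal{D}_2$ is the row span of the Kronecker product of their generator matrices. A code for the topology $T_{m\times n}(a,b,0)$ is a linear code over a finite field whose parity-check matrix is a parity-check matrix of $\mathcal{D}_{\mathsf{col}}\otimes\mathcal{D}_{\mathsf{row}}$, where $\mathcal{D}_{\mathsf{col}}$ is a linear $[m,\geq m-a]$ code and $\mathcal{D}_{\mathsf{row}}$ a linear $[n,\geq n-b]$ code; $\mathbb{C}_{m\times n}(a,b,0)$ is the set of these codes (over any finite field). $\mathcal{E}$ is correctable in $T_{m\times n}(a,b,0)$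 if some code in $\mathbb{C}_{m\times n}(a,b,0)$ corrects it; $\mathbb{E}_{m\times n}(a,b,0)$ is the set of such patterns and $\mathbb{E}^{\max}_{m\times n}(a,b,0)$ the set of those not properly contained in another correctable pattern. A code in $\mathbb{C}_{m\times n}(a,b,0)$ is maximally recoverable if it corrects every pattern in $\mathbb{E}_{m\times n}(a,b,0)$; $\mathbb{C}^{\mathsf{MR}}_{m\times n}(a,b,0)$ is the set of such codes. *)

From HB Require Import structures.
From mathcomp Require Import all_boot all_order all_algebra.
Set Implicit Arguments. Unset Strict Implicit. Unset Printing Implicit Defensive.
Import GRing.Theory.
Local Open Scope ring_scope.

(* Conventions.
   - A linear code of length N over F is the row space of a matrix
     C : 'M[F]_(k, N) (mxalgebra); its codewords are the row vectors
     x : 'rV[F]_N with (x <= C)%MS; its dimension is \rank C.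
   - Coordinates of F^(m*n) are identified with positions [m] x [n]
     through mathcomp's mxvec_index (row-major vectorization);
     [m] = 'I_m (0-based). *)

Definition pos_of (m n : nat) (k : 'I_(m * n)) : 'I_m * 'I_n :=
  enum_val (cast_ord (esym (mxvec_cast m n)) k).

Definition kron (F : fieldType) (p q m n : nat)
    (A : 'M[F]_(p, m)) (B : 'M[F]_(q, n)) : 'M[F]_(p * q, m * n) :=
  \matrix_(r, c) (A (pos_of r).1 (pos_of c).1 * B (pos_of r).2 (pos_of c).2).

Definition dual_code (F : fieldType) (k N : nat) (C : 'M[F]_(k, N)) : 'M[F]_N :=
  kermx C^T.

(* TP(C_col, C_row) := dual of the row span of Hcol (x) Hrow *)
Definition TP (F : fieldType) (m n ra rb : nat)
    (Hcol : 'M[F]_(ra, m)) (Hrow : 'M[F]_(rb, n)) : 'M[F]_(m * n) :=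
  dual_code (kron Hcol Hrow).

Definition corrects (F : fieldType) (m n k : nat) (C : 'M[F]_(k, m * n))
    (E : {set 'I_m * 'I_n}) : Prop :=
  forall x y : 'rV[F]_(m * n), (x <= C)%MS -> (y <= C)%MS ->
    (forall i j, (i, j) \notin E ->
       x 0 (mxvec_index i j) = y 0 (mxvec_index i j)) ->
    x = y.

Definition max_correctable (F : fieldType) (m n k : nat) (C : 'M[F]_(k, m * n))
    (E : {set 'I_m * 'I_n}) : Prop :=
  corrects C E /\ forall E' : {set 'I_m * 'I_n}, E \proper E' -> ~ corrects C E'.

(* C is a code for the topology T_{m x n}(a,b,0):
   C = D_col (x) D_row (as codes, i.e. same row space) with
   D_col a linear [m, >= m-a] code and D_row a linear [n, >= n-b] code. *)
Definition topo_code (F : fieldType) (m n a b k : nat) (C : 'M[F]_(k, m * n)) : Prop :=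
  exists (k1 k2 : nat) (Dcol : 'M[F]_(k1, m)) (Drow : 'M[F]_(k2, n)),
    (m - a <= \rank Dcol)%N /\ (n - b <= \rank Drow)%N /\
    (C == kron Dcol Drow)%MS.

Definition topo_correctable (m n a b : nat) (E : {set 'I_m * 'I_n}) : Prop :=
  exists (F : finFieldType) (k : nat) (C : 'M[F]_(k, m * n)),
    topo_code a b C /\ corrects C E.

Definition topo_max_correctable (m n a b : nat) (E : {set 'I_m * 'I_n}) : Prop :=
  topo_correctable a b E /\
  forall E' : {set 'I_m * 'I_n}, E \proper E' -> ~ topo_correctable a b E'.

Definition topo_MR (F : fieldType) (m n a b k : nat) (C : 'M[F]_(k, m * n)) : Prop :=
  topo_code a b C /\
  forall E : {set 'I_m * 'I_n}, topo_correctable a b E -> corrects C E.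

From HB Require Import structures.
From mathcomp Require Import all_boot all_order all_algebra zify.
Set Implicit Arguments. Unset Strict Implicit. Unset Printing Implicit Defensive.
Import GRing.Theory.
Local Open Scope ring_scope.

(* A linear code C of length N corrects the erasure pattern S iff no nonzero
   codeword is supported on S, i.e. C meets the coordinate space of S
   trivially.  Hence rank C + |S| <= N, and adding unit vectors outside
   C + <S> extends every correctable pattern to one of size N - rank C, so the
   maximal ones are exactly those of that size; for them the dual code corrects
   the complement.  Codes of the topology T(a,b,0) have rank at least
   (m-a)(n-b), so the patterns correctable in the topology have size at most
   mn - (m-a)(n-b); this bound is met by the complement of any maximal pattern
   of TP, which TP^perp = Hcol (x) Hrow corrects.  Conversely, if TP^perp is
   maximally recoverable, a maximal pattern of the topology is a maximal
   pattern of TP^perp, so TP = TP^perp^perp corrects its complement. *)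

Section CoordinateSpaces.
Variables (F : fieldType) (N : nat).
Implicit Types (S : {set 'I_N}) (x : 'rV[F]_N).

Definition supported_on S x : Prop := forall k, k \notin S -> x 0 k = 0.

Definition coord_mx S : 'M[F]_(#|S|, N) := rowsub enum_val 1%:M.

Definition corrects_set k (C : 'M[F]_(k, N)) S : Prop :=
  forall x, (x <= C)%MS -> supported_on S x -> x = 0.

Lemma coord_mxE S i k : coord_mx S i k = (enum_val i == k)%:R.
Proof. by rewrite !mxE. Qed.

Lemma delta_mx_sub_coord_mx S p : p \in S -> ((delta_mx 0 p : 'rV[F]_N) <= coord_mx S)%MS.
Proof.
move=> pS; have -> : delta_mx 0 p = row (enum_rank_in pS p) (coord_mx S).
  by apply/rowP => l; rewrite !mxE enum_rankK_in // eqxx eq_sym.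
exact: row_sub.
Qed.

Lemma sub_coord_mxP S x : (x <= coord_mx S)%MS <-> supported_on S x.
Proof.
split=> [/submxP[y ->] k kS | xS].
  rewrite mxE big1 // => i _; rewrite coord_mxE.
  by case: eqP => [eik | _]; [rewrite -eik enum_valP in kS | rewrite mulr0].
rewrite [x]matrix_sum_delta summx_sub // => i _; rewrite (ord1 i).
apply: summx_sub => p _; have [pS | pNS] := boolP (p \in S).
  by rewrite scalemx_sub ?delta_mx_sub_coord_mx.
by rewrite xS // scale0r sub0mx.
Qed.

Lemma mxrank_coord_mx S : \rank (coord_mx S) = #|S|.
Proof.
apply/eqP; rewrite eqn_leq rank_leq_row -{1}(mxrank1 F #|S|).
have <- : coord_mx S *m (coord_mx S)^T = 1%:M.
  apply/matrixP => i j; rewrite !mxE (bigD1 (enum_val i)) //= big1.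
    by rewrite !mxE eqxx mul1r addr0 (inj_eq enum_val_inj) eq_sym.
  by move=> l /negbTE il; rewrite !mxE eq_sym il mul0r.
exact: mxrankM_maxl.
Qed.

Lemma supported_on_mul_coord_mxT S x :
  supported_on (~: S) x -> x *m (coord_mx S)^T = 0.
Proof.
move=> xS; apply/rowP => i; rewrite !mxE big1 // => k _; rewrite !mxE.
case: eqP => [eik | _]; last by rewrite mulr0.
by rewrite xS ?mul0r // in_setC -eik enum_valP.
Qed.

Lemma exists_delta_mx_notin k (A : 'M[F]_(k, N)) :
  (\rank A < N)%N -> exists p, ~~ ((delta_mx 0 p : 'rV[F]_N) <= A)%MS.
Proof.
move=> ltAN; apply/existsP; rewrite -negb_forall; apply: contraL ltAN => /forallP Adelta.
rewrite -leqNgt -{1}(mxrank1 F N) mxrankS //.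
by apply/row_subP => i; rewrite row1 Adelta.
Qed.

Section Correction.
Variables (k : nat) (C : 'M[F]_(k, N)).

Lemma corrects_set_cap0 S : corrects_set C S -> (C :&: coord_mx S)%MS = 0.
Proof.
move=> CS; apply/eqP; rewrite -submx0; apply/row_subP => i; rewrite submx0.
apply/eqP/CS; first exact: submx_trans (row_sub i _) (capmxSl _ _).
by apply/sub_coord_mxP; exact: submx_trans (row_sub i _) (capmxSr _ _).
Qed.

Lemma mxrank_adds_coord_mx S :
  corrects_set C S -> \rank (C + coord_mx S) = (\rank C + #|S|)%N.
Proof. by move=> CS; rewrite mxrank_disjoint_sum ?corrects_set_cap0 ?mxrank_coord_mx. Qed.

Lemma corrects_set_rank S : corrects_set C S -> (\rank C + #|S| <= N)%N.
Proof. by move=> CS; rewrite -mxrank_adds_coord_mx // rank_leq_col. Qed.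

(* The full-rank matrix [C; coord_mx S] sends every dual codeword supported
   off S to 0. *)
Lemma corrects_set_dual S :
  corrects_set C S -> (\rank C + #|S|)%N = N -> corrects_set (dual_code C) (~: S).
Proof.
move=> CS rankCS x /sub_kermxP xC xS.
have free : row_free (col_mx C (coord_mx S))^T.
  rewrite /row_free mxrank_tr -addsmxE.
  by rewrite mxrank_adds_coord_mx ?rankCS.
apply: (row_free_inj free); rewrite mul0mx tr_col_mx mul_mx_row xC.
by rewrite supported_on_mul_coord_mxT // row_mx0.
Qed.

Lemma corrects_setU1 S p :
  corrects_set C S -> ~~ ((delta_mx 0 p : 'rV[F]_N) <= C + coord_mx S)%MS ->
  corrects_set C (p |: S).
Proof.
move=> CS pCS x xC xS.
have xp0 : x 0 p = 0.
  apply: contraNeq pCS => xp_neq0.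
  pose y := x - x 0 p *: delta_mx 0 p.
  have yS : (y <= coord_mx S)%MS.
    apply/sub_coord_mxP => l lS; rewrite /y !mxE eqxx /=.
    have [->|lp] := eqVneq l p; first by rewrite mulr1 subrr.
    by rewrite mulr0 subr0 xS // in_setU1 negb_or lp.
  have -> : delta_mx 0 p = (x 0 p)^-1 *: (x - y).
    by rewrite /y opprB addrC subrK scalerA mulVf ?scale1r.
  rewrite scalemx_sub // addmx_sub ?eqmx_opp //.
    exact: submx_trans xC (addsmxSl _ _).
  exact: submx_trans yS (addsmxSr _ _).
apply: CS => // l lS; have [-> // | lp] := eqVneq l p.
by apply: xS; rewrite in_setU1 negb_or lp.
Qed.

Lemma corrects_set_extend S : corrects_set C S ->
  exists2 S' : {set 'I_N}, S \subset S' & corrects_set C S' /\ (\rank C + #|S'|)%N = N.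
Proof.
move defd : (N - (\rank C + #|S|))%N => d.
elim: d S defd => [|d IHd] S defd CS.
  by exists S => //; split=> //; have := corrects_set_rank CS; lia.
have [|p pCS] := exists_delta_mx_notin (A := (C + coord_mx S)%MS).
  by rewrite mxrank_adds_coord_mx //; lia.
have pS : p \notin S.
  apply: contra pCS => pS.
  by rewrite (submx_trans _ (addsmxSr _ _)) ?delta_mx_sub_coord_mx.
have [|S' sS' CS'] := IHd (p |: S) _ (corrects_setU1 CS pCS).
  by rewrite cardsU1 pS; lia.
by exists S' => //; exact: subset_trans (subsetUr _ _) sS'.
Qed.

End Correction.

Lemma mxrank_dual_code k (C : 'M[F]_(k, N)) : \rank (dual_code C) = (N - \rank C)%N.
Proof. by rewrite mxrank_ker mxrank_tr. Qed.

Lemma dual_codeK k (C : 'M[F]_(k, N)) : (dual_code (dual_code C) :=: C)%MS.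
Proof.
have CCdd : (C <= dual_code (dual_code C))%MS.
  by apply/sub_kermxP; rewrite -[C in C *m _]trmxK -trmx_mul mulmx_ker trmx0.
apply/eqmx_sym/eqmxP; rewrite -(mxrank_leqif_eq CCdd) !mxrank_dual_code.
by have := rank_leq_col C; lia.
Qed.

End CoordinateSpaces.

Definition idx_of m n (u : 'I_m * 'I_n) : 'I_(m * n) := mxvec_index u.1 u.2.

Lemma idx_ofK m n : cancel (@idx_of m n) (@pos_of m n).
Proof. by case=> i j; rewrite /pos_of /idx_of /mxvec_index cast_ordK enum_rankK. Qed.

Lemma pos_ofK m n : cancel (@pos_of m n) (@idx_of m n).
Proof.
move=> k; case/mxvec_indexP: k => i j.
by rewrite -[mxvec_index i j]/(idx_of (i, j)) idx_ofK.
Qed.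

Section Kronecker.
Variable F : fieldType.

Lemma kron_mul p q m n r s (A : 'M[F]_(p, m)) (B : 'M[F]_(q, n))
    (C : 'M[F]_(m, r)) (D : 'M[F]_(n, s)) :
  kron A B *m kron C D = kron (A *m C) (B *m D).
Proof.
apply/matrixP => i j; rewrite !mxE (reindex (@idx_of m n)) /=; last first.
  by exists (@pos_of m n) => u _; rewrite ?idx_ofK ?pos_ofK.
rewrite big_distrlr pair_big /=; apply: eq_bigr => -[k1 k2] _.
by rewrite !mxE idx_ofK mulrACA.
Qed.

Lemma kron1 m n : kron (1%:M : 'M[F]_m) (1%:M : 'M[F]_n) = 1%:M.
Proof.
apply/matrixP => i j; rewrite !mxE -(can_eq (@pos_ofK m n)).
by case: (pos_of i) (pos_of j) => [i1 i2] [j1 j2]; rewrite xpair_eqE -natrM mulnb.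
Qed.

Lemma mxrank_kron_geq p q m n (A : 'M[F]_(p, m)) (B : 'M[F]_(q, n)) :
  (\rank A * \rank B <= \rank (kron A B))%N.
Proof.
have [A' rbA'] := row_freeP (row_base_free A).
have [B' rbB'] := row_freeP (row_base_free B).
have free : row_free (kron (row_base A) (row_base B)).
  by apply/row_freeP; exists (kron A' B'); rewrite kron_mul rbA' rbB' kron1.
rewrite -(eqP free) mxrankS //.
have /submxP[X ->] : (row_base A <= A)%MS by rewrite eq_row_base.
have /submxP[Y ->] : (row_base B <= B)%MS by rewrite eq_row_base.
by rewrite -kron_mul submxMl.
Qed.

End Kronecker.

Section Positions.
Variables (F : fieldType) (m n : nat).
Implicit Type E : {set 'I_m * 'I_n}.

Lemma correctsP k (C : 'M[F]_(k, m * n)) E :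
  corrects C E <-> corrects_set C (@pos_of m n @^-1: E).
Proof.
split=> [CE x xC xE | CE x y xC yC xy].
  apply: (CE x 0 xC (sub0mx _ _)) => i j ijE.
  by rewrite mxE xE // inE -[mxvec_index i j]/(idx_of (i, j)) idx_ofK.
apply/eqP; rewrite -subr_eq0; apply/eqP/CE; first by rewrite addmx_sub ?eqmx_opp.
move=> l; rewrite inE -[l]pos_ofK idx_ofK; case: (pos_of l) => i j ijNE.
by rewrite !mxE xy ?subrr.
Qed.

Lemma card_preim_pos_of E : #|@pos_of m n @^-1: E| = #|E|.
Proof.
rewrite -(can2_imset_pre _ (@idx_ofK m n) (@pos_ofK m n)).
exact/card_imset/can_inj/idx_ofK.
Qed.

Lemma corrects_rank k (C : 'M[F]_(k, m * n)) E :
  corrects C E -> (\rank C + #|E| <= m * n)%N.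
Proof. by move/correctsP/corrects_set_rank; rewrite card_preim_pos_of. Qed.

Lemma corrects_dual k (C : 'M[F]_(k, m * n)) E :
  corrects C E -> (\rank C + #|E|)%N = (m * n)%N -> corrects (dual_code C) (~: E).
Proof.
move=> /correctsP CE rankCE; apply/correctsP; rewrite preimsetC.
by apply: corrects_set_dual; rewrite ?card_preim_pos_of.
Qed.

Lemma corrects_extend k (C : 'M[F]_(k, m * n)) E : corrects C E ->
  exists2 E' : {set 'I_m * 'I_n},
    E \subset E' & corrects C E' /\ (\rank C + #|E'|)%N = (m * n)%N.
Proof.
move=> /correctsP/corrects_set_extend[S sES [CS rankCS]].
have preim_idx_of : @pos_of m n @^-1: (@idx_of m n @^-1: S) = S.
  by apply/setP => l; rewrite !inE pos_ofK.
exists (@idx_of m n @^-1: S).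
  by apply/subsetP => u uE; rewrite inE (subsetP sES) // inE idx_ofK.
by rewrite correctsP -card_preim_pos_of preim_idx_of.
Qed.

Lemma maximal_corrects_card k (C : 'M[F]_(k, m * n))
    (P : {set 'I_m * 'I_n} -> Prop) E :
  corrects C E -> (forall E', corrects C E' -> P E') ->
  (forall E', E \proper E' -> ~ P E') -> (\rank C + #|E|)%N = (m * n)%N.
Proof.
move=> /corrects_extend[E' sEE' [CE' rankCE']] CP maxE.
suff -> : E = E' by [].
apply/eqP; rewrite eqEproper sEE' /=; apply/negP => ltEE'.
exact: maxE _ ltEE' (CP _ CE').
Qed.

Lemma correctsS k k' (C : 'M[F]_(k, m * n)) (D : 'M[F]_(k', m * n)) E :
  (D <= C)%MS -> corrects C E -> corrects D E.
Proof. by move=> DC CE x y xD yD; apply: CE; exact: submx_trans DC. Qed.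

End Positions.

Lemma topo_correctable_card m n a b (E : {set 'I_m * 'I_n}) :
  topo_correctable a b E -> (#|E| + (m - a) * (n - b) <= m * n)%N.
Proof.
case=> F [k [C [[k1 [k2 [Dcol [Drow [rDcol [rDrow CD]]]]]] CE]]].
have := corrects_rank CE; rewrite (eqmx_rank CD).
by have := mxrank_kron_geq Dcol Drow; have := leq_mul rDcol rDrow; lia.
Qed.

Lemma topo_code_dual_TP (F : fieldType) m n a b
    (Hcol : 'M[F]_(m - a, m)) (Hrow : 'M[F]_(n - b, n)) :
  row_free Hcol -> row_free Hrow -> topo_code a b (dual_code (TP Hcol Hrow)).
Proof.
move=> /eqP rHcol /eqP rHrow.
exists (m - a)%N, (n - b)%N, Hcol, Hrow; rewrite rHcol rHrow.
by split=> //; split=> //; apply/eqmxP/dual_codeK.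
Qed.

Theorem theorem5 (F : finFieldType) (m n a b : nat)
    (Ccol : 'M[F]_m) (Crow : 'M[F]_n)
    (Hcol : 'M[F]_(m - a, m)) (Hrow : 'M[F]_(n - b, n)) :
  (a < m)%N -> (b < n)%N ->
  \rank Ccol = a -> \rank Crow = b ->
  row_free Hcol -> row_free Hrow ->
  (Ccol == kermx Hcol^T)%MS -> (Crow == kermx Hrow^T)%MS ->
  (forall E : {set 'I_m * 'I_n},
     max_correctable (TP Hcol Hrow) E ->
     exists E', topo_max_correctable a b E' /\ E = ~: E') /\
  (topo_MR a b (dual_code (TP Hcol Hrow)) ->
     forall E' : {set 'I_m * 'I_n},
       topo_max_correctable a b E' -> corrects (TP Hcol Hrow) (~: E')).
Proof.
move=> _ _ _ _ freeHcol freeHrow _ _.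
set C := TP Hcol Hrow.
have topoCd : topo_code a b (dual_code C) := topo_code_dual_TP freeHcol freeHrow.
have rankC : \rank C = (m * n - \rank (kron Hcol Hrow))%N := mxrank_dual_code _.
have rankK : (\rank (kron Hcol Hrow) <= (m - a) * (n - b))%N := rank_leq_row _.
have cardEC (E : {set 'I_m * 'I_n}) : (#|E| + #|~: E|)%N = (m * n)%N.
  by rewrite cardsC card_prod !card_ord.
split=> [E [CE maxE] | [_ MR] E' [tcE' maxE']].
  have rankCE := maximal_corrects_card CE (fun _ => id) maxE.
  exists (~: E); rewrite setCK; split=> //; split.
    by exists F, _, (dual_code C); split; last exact: corrects_dual.
  move=> E'' ltE'' /topo_correctable_card.
  by have := proper_card ltE''; have := cardEC E; lia.
have CdE' := MR E' tcE'.
have rankCdE' : (\rank (dual_code C) + #|E'|)%N = (m * n)%N.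
  apply: maximal_corrects_card CdE' _ maxE' => E'' CdE''.
  by exists F, _, (dual_code C).
by apply: correctsS (corrects_dual CdE' rankCdE'); rewrite dual_codeK.
Qed.
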